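(* Let $S$ be a finite set, let $\mathcal{G}\subseteq 2^S$ be connected, and let $\mathcal{C}_1,\mathcal{C}_2\subseteq\mathcal{G}$. Then $\chi(\mathcal{C}_1)=\chi(\mathcal{C}_2)$ if and only if $\mathcal{C}_1\simeq_{\mathrm{ap}(\mathcal{G})}\mathcal{C}_2$.
   Context: An adjacent pair of $2^S$ is a set $\{X,X\setminus\{x\}\}$ with $X\subseteq S$ and $x\in X$. Let $G_S$ be the undirected graph with vertex set $2^S$ whose edges are the adjacent pairs; $\mathcal{G}\subseteq 2^S$ is connected if it induces a connected subgraph of $G_S$. The allowed adjacent pairs relative to $\mathcal{G}$ are $\mathrm{ap}(\mathcal{G})=\{\mathcal{P}\mid\mathcal{P}\text{ an adjacent pair of }2^S,\ \mathcal{P}\subseteq\mathcal{G}\}$. For a set $A$ of adjacent pairs and configurations $\mathcal{C},\mathcal{C}'\subseteq 2^S$, write $\mathcal{C}\to\mathcal{C}'$ if there is $\mathcal{P}\in A$ with $\mathcal{P}\cap\mathcal{C}=\emptyset$ and $\mathcal{C}'=\mathcal{C}\cup\mathcal{P}$, or with $\mathcal{P}\subseteq\mathcal{C}$ and $\mathcal{C}'=\mathcal{C}\setminus\mathcal{P}$; $\simeq_A$ is the reflexive transitive closure of this (symmetric) relation. For a family $\mathcal{D}$ of finite sets, $\chi(\mathcal{D})=\sum_{Y\in\mathcal{D}}(-1)^{|Y|}$. *)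

From mathcomp Require Import all_boot all_order all_algebra.
From Stdlib Require Import Relations.
Set Implicit Arguments. Unset Strict Implicit. Unset Printing Implicit Defensive.
Import GRing.Theory Num.Theory.

(* The finite ground set S is the finType T; 2^S is {set T};
   families of subsets (configurations) are {set {set T}}. *)

Definition GS_edge (T : finType) : rel {set T} :=
  fun X Y => [exists x, (x \in X) && (Y == X :\ x)]
          || [exists x, (x \in Y) && (X == Y :\ x)].

Definition induced_edge (T : finType) (G : {set {set T}}) : rel {set T} :=
  fun X Y => [&& X \in G, Y \in G & GS_edge X Y].

Definition connected_family (T : finType) (G : {set {set T}}) : Prop :=
  forall X Y, X \in G -> Y \in G -> connect (induced_edge G) X Y.

Definition ap (T : finType) (G : {set {set T}}) : {set {set {set T}}} :=
  [set P | [exists X : {set T}, exists x : T,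
              (x \in X) && (P == [set X; X :\ x])] & P \subset G].

Definition move (T : finType) (A : {set {set {set T}}})
    (C C' : {set {set T}}) : Prop :=
  exists2 P, P \in A &
    ((P :&: C = set0 /\ C' = C :|: P) \/ (P \subset C /\ C' = C :\: P)).

Definition equivA (T : finType) (A : {set {set {set T}}}) :
    relation {set {set T}} :=
  clos_refl_trans _ (move A).

Definition chi (T : finType) (D : {set {set T}}) : int :=
  (\sum_(Y in D) (-1) ^+ #|Y|)%R.

From mathcomp Require Import all_boot all_order all_algebra.
From Stdlib Require Import Relations.
Set Implicit Arguments. Unset Strict Implicit. Unset Printing Implicit Defensive.
Import GRing.Theory Num.Theory.

(* Toggling a vertex X in a configuration C changes chi by (-1)^t, where
   t = [X \in C] xor odd |X|.  Across an adjacent pair the parity of |X|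
   flips, so a pair is a legal move exactly when its two signs t differ, i.e.
   exactly when toggling it preserves chi.  By induction along a path in G,
   any two vertices Y, Z of G with different signs can be toggled together by
   legal moves: toggle the first edge of the path either before or after the
   rest, depending on the sign of its far end.  Conversely, if chi C1 = chi C2
   the signs of C1 over the symmetric difference of C1 and C2 sum to zero, so
   two of them differ; toggling those two shrinks the symmetric difference. *)

Local Open Scope ring_scope.

Section SymmetricDifference.
Variable I : finType.
Implicit Types A B D : {set I}.

Definition symdiff A B : {set I} := (A :\: B) :|: (B :\: A).

Lemma in_symdiff A B x : (x \in symdiff A B) = (x \in A) (+) (x \in B).
Proof. by rewrite !inE; case: (x \in A); case: (x \in B). Qed.

Lemma symdiffA A B D : symdiff A (symdiff B D) = symdiff (symdiff A B) D.
Proof. by apply/setP=> x; rewrite !in_symdiff addbA. Qed.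

Lemma symdiffC A B : symdiff A B = symdiff B A.
Proof. by apply/setP=> x; rewrite !in_symdiff addbC. Qed.

Lemma symdiffK A B : symdiff A (symdiff A B) = B.
Proof. by apply/setP=> x; rewrite !in_symdiff addKb. Qed.

Lemma symdiffs0 A : symdiff A set0 = A.
Proof. by apply/setP=> x; rewrite in_symdiff inE addbF. Qed.

Lemma symdiff_disjoint A B : B :&: A = set0 -> symdiff A B = A :|: B.
Proof.
move=> /setP dis; apply/setP=> x; have := dis x.
by rewrite in_symdiff !inE; case: (x \in A); case: (x \in B).
Qed.

Lemma symdiff_sub A B : B \subset A -> symdiff A B = A :\: B.
Proof.
move=> /subsetP sBA; apply/setP=> x; have := sBA x.
by rewrite in_symdiff !inE; case: (x \in A); case: (x \in B) => // ->.
Qed.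

Lemma symdiff_setD A B : B \subset A -> symdiff B (A :\: B) = A.
Proof.
move=> /subsetP sBA; apply/setP=> x; have := sBA x.
by rewrite in_symdiff !inE; case: (x \in A); case: (x \in B) => // ->.
Qed.

Lemma symdiff_subU A B D : A \subset D -> B \subset D -> symdiff A B \subset D.
Proof. by move=> sAD sBD; rewrite subUset !(subset_trans (subsetDl _ _)). Qed.

Lemma symdiff_set2 x y z : x != y -> y != z -> x != z ->
  symdiff [set x; y] [set y; z] = [set x; z].
Proof.
move=> nxy nyz nxz; apply/setP=> u; rewrite in_symdiff !inE.
case: (eqVneq u y) => [->|_]; first by rewrite eq_sym (negbTE nxy) (negbTE nyz).
by case: (eqVneq u x) => [->|] //=; rewrite (negbTE nxz).
Qed.

End SymmetricDifference.

Lemma sum_set2 (R : nmodType) (I : finType) (x y : I) (F : I -> R) :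
  x != y -> \sum_(i in [set x; y]) F i = F x + F y.
Proof. by move=> nxy; rewrite big_setU1 ?inE // big_set1. Qed.

Lemma add_signr_neq (R : pzRingType) (b c : bool) :
  b != c -> (-1) ^+ b + (-1) ^+ c = 0 :> R.
Proof. by case: b; case: c => //= _; rewrite ?expr0 ?expr1 ?addrN ?addNr. Qed.

Lemma sum_signr_eq0_neq (R : numDomainType) (I : finType) (D : {set I})
    (f : I -> bool) :
  D != set0 -> \sum_(i in D) (-1) ^+ f i = 0 :> R ->
  exists2 i, i \in D & exists2 j, j \in D & f i != f j.
Proof.
case/set0Pn=> i iD sum0; exists i => //.
have [j /andP[jD fij] | same] := pickP [pred j | (j \in D) && (f i != f j)].
  by exists j.
have sumE : \sum_(j in D) (-1) ^+ f j = (-1) ^+ f i *+ #|D| :> R.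
  rewrite -sumr_const; apply: eq_bigr => j jD.
  by have := same j; rewrite /= jD => /negbFE/eqP->.
move/eqP: sum0; rewrite sumE mulrn_eq0 signr_eq0 orbF cards_eq0.
by move/eqP=> D0; rewrite D0 inE in iD.
Qed.

Section Moves.
Variable T : finType.
Implicit Types (G C D P : {set {set T}}) (U V X Y Z W : {set T}).

Definition toggle_sign C X : bool := (X \in C) (+) odd #|X|.

Lemma toggle_sign_symdiff C D X :
  toggle_sign (symdiff C D) X = toggle_sign C X (+) (X \in D).
Proof. by rewrite /toggle_sign in_symdiff addbAC. Qed.

Lemma chi_symdiff C D :
  chi (symdiff C D) = chi C + \sum_(X in D) (-1) ^+ toggle_sign C X.
Proof.
rewrite /chi big_mkcond [X in _ = X + _]big_mkcond [X in _ = _ + X]big_mkcond.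
rewrite -big_split /=; apply: eq_bigr => X _.
rewrite in_symdiff /toggle_sign signr_addb signr_odd.
by case: (X \in C); case: (X \in D); rewrite /= ?expr0 ?expr1 ?mulN1r ?mul1r
  ?addr0 ?add0r ?addrN.
Qed.

Lemma GS_edge_odd U V : GS_edge U V -> odd #|V| = ~~ odd #|U|.
Proof.
case/orP=> /existsP[x /andP[xW /eqP->]].
  by rewrite (cardsD1 x U) xW add1n /= negbK.
by rewrite (cardsD1 x V) xW add1n.
Qed.

Lemma GS_edge_neq U V : GS_edge U V -> U != V.
Proof.
move/GS_edge_odd=> oddUV; apply/eqP=> eUV.
by move: oddUV; rewrite eUV; case: (odd _).
Qed.

Lemma toggle_sign_edge C U V : GS_edge U V ->
  (toggle_sign C U != toggle_sign C V) = ((U \in C) == (V \in C)).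
Proof.
rewrite /toggle_sign => /GS_edge_odd->.
by case: (U \in C); case: (V \in C); case: (odd _).
Qed.

Lemma apP G P : P \in ap G -> exists U V, P = [set U; V] /\ GS_edge U V.
Proof.
rewrite inE => /andP[/existsP[X /existsP[x /andP[xX /eqP->]]] _].
exists X, (X :\ x); split => //; apply/orP; left.
by apply/existsP; exists x; rewrite xX eqxx.
Qed.

Lemma ap_induced_edge G U V : induced_edge G U V -> [set U; V] \in ap G.
Proof.
case/and3P=> UG VG e; rewrite inE; apply/andP; split; last first.
  by apply/subsetP=> X; rewrite !inE => /orP[]/eqP->.
case/orP: e => /existsP[x /andP[xX /eqP->]]; apply/existsP.
  by exists U; apply/existsP; exists x; rewrite xX eqxx.
by exists V; apply/existsP; exists x; rewrite xX setUC eqxx.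
Qed.

Lemma move_symdiff G C C' : move (ap G) C C' ->
  exists U V, [/\ GS_edge U V, toggle_sign C U != toggle_sign C V &
                  C' = symdiff C [set U; V]].
Proof.
case=> P /apP[U [V [-> eUV]]] hC'; exists U, V; split=> //.
  rewrite toggle_sign_edge //.
  case: hC' => [[/setP dis _] | [/subsetP sub _]].
    by have := dis U; have := dis V; rewrite !inE !eqxx orbT /= => <- <-.
  by rewrite !sub ?inE ?eqxx ?orbT.
by case: hC' => [[/symdiff_disjoint-> ->] | [/symdiff_sub-> ->]].
Qed.

Lemma move_chi G C C' : move (ap G) C C' -> chi C = chi C'.
Proof.
case/move_symdiff=> U [V [eUV tUV ->]].
by rewrite chi_symdiff sum_set2 ?GS_edge_neq // add_signr_neq // addr0.
Qed.

Lemma equivA_chi G C C' : equivA (ap G) C C' -> chi C = chi C'.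
Proof. by elim=> [? ? /move_chi | // | ? ? ? _ -> _ ->]. Qed.

Lemma move_edge G C U V : induced_edge G U V ->
  toggle_sign C U != toggle_sign C V -> move (ap G) C (symdiff C [set U; V]).
Proof.
move=> eUV; have /and3P[_ _ /toggle_sign_edge->] := eUV; move=> /eqP sameUV.
exists [set U; V]; first exact: ap_induced_edge.
case: (boolP (U \in C)) => UC; [right | left].
  suff sub : [set U; V] \subset C by rewrite symdiff_sub.
  by apply/subsetP=> X; rewrite !inE => /orP[]/eqP->; rewrite -?sameUV.
suff dis : [set U; V] :&: C = set0 by rewrite symdiff_disjoint.
apply/setP=> X; rewrite !inE.
have [->|_] := eqVneq X U; first by rewrite (negbTE UC) andbF.
by have [->|_] := eqVneq X V; rewrite -?sameUV ?(negbTE UC) ?andbF.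
Qed.

Lemma equivA_path G C Y p : path (induced_edge G) Y p ->
  toggle_sign C Y != toggle_sign C (last Y p) ->
  equivA (ap G) C (symdiff C [set Y; last Y p]).
Proof.
elim: p Y C => [|W p IH] Y C /=; first by rewrite eqxx.
case/andP=> eYW pW; set Z := last W p => tYZ.
have nYW : Y != W by case/and3P: eYW => _ _ /GS_edge_neq.
have nYZ : Y != Z by apply: contraNneq tYZ => ->.
case: (eqVneq (toggle_sign C Y) (toggle_sign C W)) => [tYW | tYW].
  have tWZ : toggle_sign C W != toggle_sign C Z by rewrite -tYW.
  have nWZ : W != Z by apply: contraNneq tWZ => ->.
  apply: rt_trans (IH W C pW tWZ) _.
  rewrite -(symdiff_set2 nYW nWZ nYZ) [symdiff [set Y; W] _]symdiffC symdiffA.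
  apply/rt_step/(move_edge eYW).
  by rewrite !toggle_sign_symdiff !inE eqxx (negbTE nYW) (negbTE nYZ) tYW;
    case: (toggle_sign C W).
apply: (rt_trans _ _ _ (symdiff C [set Y; W])); first exact/rt_step/move_edge.
have [eWZ | nWZ] := eqVneq W Z; first by rewrite -eWZ; apply: rt_refl.
rewrite -(symdiff_set2 nYW nWZ nYZ) symdiffA; apply: IH => //.
rewrite !toggle_sign_symdiff !inE eqxx orbT ![Z == _]eq_sym.
rewrite (negbTE nYZ) (negbTE nWZ) /=; move: tYW tYZ.
by case: (toggle_sign C Y); case: (toggle_sign C W); case: (toggle_sign C Z).
Qed.

Lemma equivA_connected G C Y Z : connected_family G -> Y \in G -> Z \in G ->
  toggle_sign C Y != toggle_sign C Z -> equivA (ap G) C (symdiff C [set Y; Z]).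
Proof.
move=> cG YG ZG; have /connectP[p pY ->] := cG Y Z YG ZG.
exact: equivA_path.
Qed.

Lemma equivA_symdiff G C D : connected_family G -> D \subset G ->
  \sum_(X in D) (-1) ^+ toggle_sign C X = 0 :> int ->
  equivA (ap G) C (symdiff C D).
Proof.
move=> cG; elim: {D}_.+1 {-2}D (ltnSn #|D|) C => // n IH D.
rewrite ltnS => leDn C DG sum0.
have [-> | nD0] := eqVneq D set0; first by rewrite symdiffs0; apply: rt_refl.
have [Y YD [Z ZD tYZ]] := sum_signr_eq0_neq nD0 sum0.
have nYZ : Y != Z by apply: contraNneq tYZ => ->.
have PD : [set Y; Z] \subset D by apply/subsetP=> X; rewrite !inE => /orP[]/eqP->.
apply: rt_trans (equivA_connected cG (subsetP DG Y YD) (subsetP DG Z ZD) tYZ) _.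
rewrite -(symdiff_setD PD) symdiffA; apply: IH.
- apply: leq_trans leDn; apply: proper_card; apply/properP; split.
    exact: subsetDl.
  by exists Y; rewrite // !inE eqxx.
- exact: subset_trans (subsetDl _ _) DG.
- move: sum0; rewrite (big_setID [set Y; Z]) /= (setIidPr PD) sum_set2 //.
  rewrite add_signr_neq // add0r => <-; apply: eq_bigr => X.
  by rewrite inE toggle_sign_symdiff => /andP[/negbTE-> _]; rewrite addbF.
Qed.

End Moves.

Theorem proposition6p7 (T : finType) (G C1 C2 : {set {set T}}) :
  connected_family G -> C1 \subset G -> C2 \subset G ->
  (chi C1 = chi C2 <-> equivA (ap G) C1 C2).
Proof.
move=> cG C1G C2G; split; last exact: equivA_chi.
move=> chi12; rewrite -[C2](symdiffK C1).
apply: equivA_symdiff cG (symdiff_subU C1G C2G) _.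
by apply: (addrI (chi C1)); rewrite addr0 -chi_symdiff symdiffK.
Qed.
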